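(* Let $\Gamma$ be a lattice satisfying the standing assumptions below, and let $\mathcal{F}_1,\dots,\mathcal{F}_K$ be the face-equivalence classes of $\mathcal{F}$. Let $f\in\mathcal{F}_i$ and $f'\in\mathcal{F}_j$ with $i\neq j$. Then for every face path $\rho=(f_1=f,\dots,f_m=f')$ from $f$ to $f'$, the operator $W^Z_{f,f'}(\rho)=\prod_{k=1}^m Z_{f_k}$ is a ($Z$-type) logical operator of the 3D toric code on $\Gamma$.
   Context: $\Gamma$ is a finite, connected three-dimensional cell complex with edges $C_1(\Gamma)$ (partial edges allowed at the boundary), faces $C_2(\Gamma)$, volumes $C_3(\Gamma)$; $\partial(f)$ denotes boundary edges of a face, $\partial(\nu)$ boundary faces of a volume, $\iota(e)$ the faces containing edge $e$, and $\iota(f)$ the volumes having $f$ in their boundary. Every face lies in the boundary of at most two volumes. Standing assumptions: (L1) $\Gamma$ has no boundaries in its interior; (L2) the boundary of every face of $\Gamma$ and of its dual $\Gamma^*$ is a closed path or an open path beginning and ending with partial edges; the dual complex is connected. The 3D toric code on $\Gamma$ has one qubit per face and stabilizer group generated by $B_e=\prod_{f\in\iota(e)}Z_f$ and $A_\nu=\prod_{f\in\partial(\nu)}X_f$; a logical operator is a Pauli operator commuting with all stabilizers but not in the stabilizer group (up to phase). A face path from $f_1$ to $f_m$ is a sequence of faces $(f_1,\dots,f_m)$ with pairwise distinct volumes $\nu_1,\dots,\nu_{m-1}$ such that $f_i,f_{i+1}\in\partial(\nu_i)$. Let $\mathcal{F}=\{f\in C_2(\Gamma):|\iota(f)|=1\}$.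 Two faces $f,f'\in\mathcal{F}$ are face-equivalent if there is a face path $\rho$ from $f$ to $f'$ such that $\prod_{g\in\rho}Z_g$ is a stabilizer; every face is considered equivalent to itself. As in the paper, face equivalence is taken to be an equivalence relation on $\mathcal{F}$, with classes $\mathcal{F}_1,\dots,\mathcal{F}_K$. *)

From mathcomp Require Import all_boot.
Set Implicit Arguments. Unset Strict Implicit. Unset Printing Implicit Defensive.

Record complex := Complex {
  edge : finType;
  face : finType;
  vol  : finType;
  bd_face : face -> {set edge};
  bd_vol  : vol -> {set face}
}.

Section Defs.
Variable G : complex.
Local Notation E := (edge G).
Local Notation F := (face G).
Local Notation V := (vol G).

Definition iota_e (e : E) : {set F} := [set f | e \in bd_face f].
Definition iota_f (f : F) : {set V} := [set v | f \in bd_vol v].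

(* Pauli operators on the face qubits, up to phase, in the binary symplectic
   representation: (X-support, Z-support). *)
Definition pauli := ({set F} * {set F})%type.

Definition commute (P Q : pauli) : bool :=
  odd #|P.1 :&: Q.2| == odd #|P.2 :&: Q.1|.

Definition B_op (e : E) : pauli := (set0, iota_e e).
Definition A_op (v : V) : pauli := (bd_vol v, set0).

(* P lies (up to phase) in the group generated by the B_e and A_nu:
   it is the product of B_e (e in SE) and A_nu (nu in SV). *)
Definition in_stab (P : pauli) : Prop :=
  exists (SE : {set E}) (SV : {set V}),
    P = ([set f | odd #|[set v in SV | f \in bd_vol v]|],
         [set f | odd #|[set e in SE | f \in iota_e e]|]).

Definition logical (P : pauli) : Prop :=
  [/\ forall e, commute P (B_op e), forall v, commute P (A_op v) & ~ in_stab P].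

Definition Zprod (s : seq F) : pauli := (set0, [set g | odd (count_mem g s)]).

Definition face_path (f f' : F) (p : seq F) : Prop :=
  exists vs : seq V,
    [/\ 0 < size p, nth f p 0 = f, last f p = f',
        size vs = (size p).-1 & uniq vs] /\
        forall i (v0 : V) (f0 : F), i < size vs ->
          (nth f0 p i \in bd_vol (nth v0 vs i)) &&
          (nth f0 p i.+1 \in bd_vol (nth v0 vs i)).

Definition calF : {set F} := [set f | #|iota_f f| == 1].

Definition face_equiv (f f' : F) : Prop :=
  f = f' \/ exists p, face_path f f' p /\ in_stab (Zprod p).

End Defs.

From Pilot Require Import Defs.
From mathcomp Require Import all_boot.

(* Z-type operators commute with every B_e, and Zprod p commutes with A_nu iff
   the faces of p, counted with multiplicity, lie in the boundary of nu an even
   number of times. Each face of the path lies in the boundary of exactly the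
   volumes it is adjacent to along the path: an interior face is adjacent to two
   distinct volumes and lies in at most two, and an endpoint, being in calF,
   lies in only one. So each volume nu_i of the path is counted exactly twice,
   through f_i and f_(i+1). Finally, if Zprod p were a stabilizer, the endpoints
   would be face-equivalent. *)

Lemma count_nth_sum {T : Type} (x0 : T) (a : pred T) (s : seq T) :
  count a s = \sum_(i < size s) a (nth x0 s i).
Proof.
rewrite -sum1_count big_mkcond (big_nth x0) big_mkord.
by apply: eq_bigr => i _; case: (a _).
Qed.

Lemma odd_card_odd_count_setI (T : finType) (s : seq T) (B : {set T}) :
  odd #|[set x | odd (count_mem x s)] :&: B| = odd (count (mem B) s).
Proof.
elim: s => [|y s IHs] /=.
  by rewrite (_ : _ :&: B = set0) ?cards0 //; apply/setP => x; rewrite !inE.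
rewrite oddD -IHs (cardsD1 y ([set x | odd (count_mem x s)] :&: B)).
rewrite (cardsD1 y ([set x | odd ((y == x) + count_mem x s)] :&: B)).
have -> : [set x | odd ((y == x) + count_mem x s)] :&: B :\ y =
          [set x | odd (count_mem x s)] :&: B :\ y.
  by apply/setP => x; rewrite !inE; case: (eqVneq x y).
rewrite !inE eqxx /= !oddD.
by case: (y \in B); case: (odd (count_mem y s)); case: (odd #|_|).
Qed.

Lemma commute_Zprod_B (G : complex) (s : seq (face G)) (e : edge G) :
  Defs.commute (Zprod s) (B_op e).
Proof. by rewrite /Defs.commute /= set0I setI0. Qed.

Section FacePathIncidence.

Variable G : complex.
Local Notation F := (face G).
Local Notation V := (vol G).

Hypothesis two_vols : forall g : F, #|iota_f g| <= 2.

Variables (p : seq F) (vs : seq V) (x0 : F) (v0 : V).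
Local Notation n := (size vs).

Hypotheses (size_p : size p = n.+1) (n_gt0 : 0 < n) (uniq_vs : uniq vs).
Hypotheses (head_calF : nth x0 p 0 \in calF G) (last_calF : nth x0 p n \in calF G).
Hypothesis adj : forall i, i < n ->
  (nth x0 p i \in bd_vol (nth v0 vs i)) && (nth x0 p i.+1 \in bd_vol (nth v0 vs i)).

Definition path_nbr_vols (k : nat) : {set V} :=
  [set v | ((0 < k) && (nth v0 vs k.-1 == v)) || ((k < n) && (nth v0 vs k == v))].

Lemma path_vols_pred_neq k : 0 < k < n -> nth v0 vs k.-1 != nth v0 vs k.
Proof.
case/andP=> k_gt0 lt_kn; rewrite nth_uniq ?(leq_ltn_trans (leq_pred k)) //.
by rewrite neq_ltn prednK ?leqnn.
Qed.

Lemma path_nbr_vols_sub k :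
  k < n.+1 -> path_nbr_vols k \subset iota_f (nth x0 p k).
Proof.
move=> lt_kn1; apply/subsetP => v; rewrite !inE.
case/orP => /andP[lt_k /eqP <-]; last by case/andP: (adj _ lt_k).
by have := adj k.-1; rewrite prednK // => /(_ lt_kn1) /andP[].
Qed.

Lemma card_iota_f_path k :
  k < n.+1 -> #|iota_f (nth x0 p k)| <= #|path_nbr_vols k|.
Proof.
move=> lt_kn1.
have calF1 g : g \in calF G -> #|iota_f g| = 1 by rewrite inE => /eqP.
have [->|k_gt0] := posnP k.
  rewrite calF1 // card_gt0; apply/set0Pn; exists (nth v0 vs 0).
  by rewrite inE n_gt0 eqxx orbT.
have [lt_kn|] := ltnP k n; last first.
  move=> le_nk; have -> : k = n by apply/eqP; rewrite eqn_leq le_nk andbT -ltnS.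
  rewrite calF1 // card_gt0.
  by apply/set0Pn; exists (nth v0 vs n.-1); rewrite inE (leq_trans k_gt0) ?eqxx.
apply: leq_trans (two_vols _) _.
have <- : #|[set nth v0 vs k.-1; nth v0 vs k]| = 2.
  by rewrite cards2 path_vols_pred_neq ?k_gt0.
by apply/subset_leq_card/subsetP => v; rewrite !inE k_gt0 lt_kn /= !(eq_sym v).
Qed.

Lemma iota_f_path k : k < n.+1 -> iota_f (nth x0 p k) = path_nbr_vols k.
Proof.
move=> lt_kn1; apply/esym/eqP.
by rewrite eqEcard path_nbr_vols_sub ?card_iota_f_path.
Qed.

Lemma in_bd_vol_path k v : k < n.+1 ->
  nth x0 p k \in bd_vol v =
  ((0 < k) && (nth v0 vs k.-1 == v)) + ((k < n) && (nth v0 vs k == v)) :> nat.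
Proof.
move=> lt_kn1; have := iota_f_path k lt_kn1.
move/setP/(_ v); rewrite !inE => ->.
have [-> //|k_gt0 /=] := posnP k.
have [lt_kn|] := ltnP k n; last by rewrite orbF addn0.
by case: eqP => [<-|//]; rewrite eq_sym (negbTE (path_vols_pred_neq k _)) ?k_gt0.
Qed.

Lemma count_bd_vol_path v : count (mem (bd_vol v)) p = (count_mem v vs).*2.
Proof.
rewrite (count_nth_sum x0) (count_nth_sum v0) size_p -addnn.
under eq_bigr => k _ do rewrite (in_bd_vol_path k v (ltn_ord k)).
rewrite big_split big_ord_recl big_ord_recr /= ltnn addn0 add0n.
by congr (_ + _); apply: eq_bigr => i _; rewrite ?ltn_ord.
Qed.

End FacePathIncidence.

Theorem lemma3 (G : complex)
  (two_vols : forall f : face G, #|iota_f f| <= 2)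
  (f f' : face G) :
  f \in calF G -> f' \in calF G -> ~ face_equiv f f' ->
  forall p : seq (face G), face_path f f' p -> logical (Zprod p).
Proof.
move=> f_calF f'_calF not_equiv p p_path.
have [vs [[p_gt0 p_head p_last size_vs uniq_vs] adj]] := p_path.
have size_p : size p = (size vs).+1 by rewrite size_vs prednK.
have p_end : nth f p (size vs) = f' by rewrite -p_last -nth_last size_p.
have vs_gt0 : 0 < size vs.
  rewrite lt0n; apply/negP => /eqP vs0; apply: not_equiv; left.
  by rewrite -p_end vs0.
split=> [e|v|stab]; first exact: commute_Zprod_B.
  rewrite /Defs.commute /= setI0 cards0 odd_card_odd_count_setI.
  rewrite (count_bd_vol_path _ two_vols _ _ f v size_p vs_gt0 uniq_vs) ?odd_double //.
  - by rewrite p_head.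
  - by rewrite p_end.
  - by move=> i; apply: adj.
by apply: not_equiv; right; exists p.
Qed.
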